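(* Let $n\ge1$ be an integer, let $\rho_{\mathrm{enc}}^{(n)}$ be the encrypted-cloning encoded state on qubits $A,S_1,N_1,\dots,S_n,N_n$ (defined in the context), let $\mathcal R_n=\{S_1,N_1,\dots,S_n,N_n\}$ and let $B\subseteq\mathcal R_n$. Then: (i) If $B$ misses one or more complete pairs $\{S_i,N_i\}$ (which necessarily happens if $|B|<n$), then $B$ is completely uninformative. (ii) If $B$ contains at least one qubit from each pair $\{S_i,N_i\}$ (so $|B|\ge n$), then: if $|B|>n$, $B$ is authorized; if $|B|=n$, let $p$ be the number of signal qubits $S_i$ in $B$; then $B$ is completely uninformative when $n$ is even, completely uninformative when $n$ is odd and $p$ is even, and partially informative when $n$ is odd and $p$ is odd. In the partially informative case the reduced state is $$\rho_B=\frac{1}{2^n}\Big(I^{\otimes n}+(-1)^{(n-1)/2}\,y\,Y^{\otimes n}\Big),$$ where $y=\bra{\psi}Y\ket{\psi}$.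
   Context: Pauli operators: $\sigma_0=I,\sigma_1=X,\sigma_2=Y,\sigma_3=Z$. An input qubit $A$ is prepared in an arbitrary pure state $\ket{\psi}_A$, with Bloch components $x=\bra\psi X\ket\psi$, $y=\bra\psi Y\ket\psi$, $z=\bra\psi Z\ket\psi$. For $i=1,\dots,n$, the signal qubit $S_i$ and noise qubit $N_i$ are prepared in the Bell state $\ket{\phi}_{S_iN_i}=\frac{1}{\sqrt2}(\ket{00}+\ket{11})$. Set $\alpha_0=1$, $\alpha_1=\alpha_3=i$, $\alpha_2=-i^{\,n+1}$, and define the unitary $U_{\mathrm{enc}}^{(n)}=\frac12\sum_{\mu=0}^3\alpha_\mu^{-1}\sigma_\mu^{(A)}\otimes\bigotimes_{i=1}^n\sigma_\mu^{(S_i)}$ (acting as identity on the $N_i$). The encoded state is $\ket{\Psi_{\mathrm{enc}}}=U_{\mathrm{enc}}^{(n)}\big[\ket{\psi}_A\otimes\bigotimes_{i=1}^n\ket{\phi}_{S_iN_i}\big]$ and $\rho_{\mathrm{enc}}^{(n)}=\ket{\Psi_{\mathrm{enc}}}\bra{\Psi_{\mathrm{enc}}}$. For $B\subseteq\mathcal R_n$, the reduced state $\rho_B(\psi)$ is obtained from $\rho_{\mathrm{enc}}^{(n)}$ by tracing out $A$ and all qubits of $\mathcal R_n\setminus B$; in $Y^{\otimes n}$ and $I^{\otimes n}$ the tensor factors act on the $n$ qubits of $B$. $B$ is completely uninformative if $\rho_B(\psi)$ is independent of $\ket\psi$, and partially informative if it is not authorized and $\rho_B(\psi)$ depends nontrivially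 on $\ket\psi$. $B$ is authorized if it contains one complete pair $\{S_j,N_j\}$ and at least one qubit from each of the remaining $n-1$ pairs (such subsets allow perfect recovery of $\ket\psi$). *)

(* Complex scalars: an arbitrary numClosedFieldType C
   (e.g. R[i] for R : realType), so the statement covers the complex numbers. *)
From HB Require Import structures.
From mathcomp Require Import all_boot all_order all_algebra all_field.
Set Implicit Arguments. Unset Strict Implicit. Unset Printing Implicit Defensive.
Import Order.TTheory GRing.Theory Num.Theory.
Local Open Scope ring_scope.

Definition qubit (n : nat) := option ('I_n * bool)%type.
Definition qA (n : nat) : qubit n := None.
Definition qS (n : nat) (i : 'I_n) : qubit n := Some (i, false).
Definition qN (n : nat) (i : 'I_n) : qubit n := Some (i, true).

(* Computational-basis configurations of all 2n+1 qubits (false = |0>, true = |1>). *)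
Definition config (n : nat) := {ffun qubit n -> bool}.

Section Encoding.
Variable C : numClosedFieldType.

(* Pauli matrix sigma_mu, entry <a| sigma_mu |b>. *)
Definition pauli (mu : nat) (a b : bool) : C :=
  match mu with
  | 0%N => (a == b)%:R
  | 1%N => (a != b)%:R
  | 2%N => if a == b then 0 else if a then 'i else - 'i
  | _ => if a == b then (if a then -1 else 1) else 0
  end.

(* a single-qubit pure state psi = psi false |0> + psi true |1> *)
Definition normalized (psi : bool -> C) : Prop :=
  `|psi false| ^+ 2 + `|psi true| ^+ 2 = 1.

Definition blochY (psi : bool -> C) : C :=
  \sum_(a : bool) \sum_(b : bool) (psi a)^* * pauli 2 a b * psi b.

Definition alpha (n mu : nat) : C :=
  match mu with
  | 0%N => 1
  | 1%N => 'i
  | 2%N => - ('i ^+ n.+1)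
  | _ => 'i
  end.

Definition enc_site (n mu : nat) (q : qubit n) : nat :=
  match q with
  | Some (_, true) => 0%N
  | _ => mu
  end.

Definition Uenc (n : nat) (x y : config n) : C :=
  2^-1 * \sum_(mu < 4) (alpha n mu)^-1 *
           \prod_(q : qubit n) pauli (enc_site mu q) (x q) (y q).

Definition init_state (n : nat) (psi : bool -> C) (x : config n) : C :=
  psi (x (qA n)) * \prod_(i < n) ((x (qS i) == x (qN i))%:R / sqrtC 2).

Definition enc_state (n : nat) (psi : bool -> C) (x : config n) : C :=
  \sum_(y : config n) Uenc x y * init_state psi y.

Definition rho_enc (n : nat) (psi : bool -> C) (x y : config n) : C :=
  enc_state psi x * (enc_state psi y)^*.

Definition merge (n : nat) (B : {set qubit n}) (u c : config n) : config n :=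
  [ffun q => if q \in B then u q else c q].

(* It is encoded as
   a function of two full configurations u, v which depends only on the values
   of u, v on B (the entries <u|_B rho_B |v|_B>). *)
Definition reduced (n : nat) (psi : bool -> C) (B : {set qubit n}) (u v : config n) : C :=
  \sum_(c : config n | [forall q, (q \in B) ==> ~~ c q])
     rho_enc psi (merge B u c) (merge B v c).

Definition uninformative (n : nat) (B : {set qubit n}) : Prop :=
  forall psi psi' : bool -> C, normalized psi -> normalized psi' ->
    forall u v : config n, reduced psi B u v = reduced psi' B u v.

End Encoding.

Definition authorized (n : nat) (B : {set qubit n}) : Prop :=
  exists j : 'I_n, qS j \in B /\ qN j \in B /\
    (forall i : 'I_n, qS i \in B \/ qN i \in B).

Definition partially_informative (C : numClosedFieldType) (n : nat)
    (B : {set qubit n}) : Prop :=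
  ~ authorized B /\
  exists psi psi' : bool -> C, normalized psi /\ normalized psi' /\
    exists u v : config n, reduced psi B u v <> reduced psi' B u v.

(* Expanding U_enc in the computational basis, and using that (sigma_mu (x) I) |phi>
   has amplitudes sigma_mu / sqrt 2, the encoded state is, up to a constant,
   sum_mu alpha_mu^-1 (sigma_mu psi) (x) (x)_i sigma_mu, each pair i carrying the matrix
   sigma_mu as a vector.  In rho_B the (mu, nu) cross term factorises over the pairs:
   a pair traced out completely contributes Tr(sigma_mu sigma_nu^+) = 2 delta_(mu nu),
   a pair of which B keeps S_i (resp. N_i) contributes sigma_mu sigma_nu (resp. the
   transpose of sigma_nu sigma_mu), i.e. a phase times a Pauli matrix, and the A-factor
   contributes <psi| sigma_nu sigma_mu |psi>.  So if a pair is missing, only the diagonal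
   terms survive and they do not depend on psi.  If B keeps exactly one qubit of each
   pair, the phases of the p signal and n - p noise qubits combine with the alpha_mu so
   that everything cancels except the identity term and, exactly when n and p are odd,
   the sigma_Y term with coefficient y.  Finally a set with more than n qubits meeting
   every pair contains a full pair by pigeonhole. *)

From Pilot Require Import Defs.
From HB Require Import structures.
From mathcomp Require Import all_boot all_order all_algebra all_field.
From mathcomp Require Import ring zify.
Set Implicit Arguments. Unset Strict Implicit. Unset Printing Implicit Defensive.
Import Order.TTheory GRing.Theory Num.Theory.
Local Open Scope ring_scope.

Local Ltac case_I4 mu := case: mu => [[|[|[|[|//]]]] ?].

Section BigQubit.
Variables (R : Type) (idx : R) (op : Monoid.com_law idx).

Lemma big_option (T : finType) (F : option T -> R) :
  \big[op/idx]_(o : option T) F o = op (F None) (\big[op/idx]_(x : T) F (Some x)).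
Proof.
rewrite (bigD1 None) //= (reindex_omap Some id) => [|[]//].
by congr (op _ _); apply: eq_bigl => x; rewrite eqxx.
Qed.

Lemma big_qubit (n : nat) (F : qubit n -> R) :
  \big[op/idx]_(q : qubit n) F q =
  op (F (qA n)) (\big[op/idx]_(i < n) op (F (qS i)) (F (qN i))).
Proof.
rewrite big_option; congr (op _ _).
rewrite [RHS](eq_bigr (fun i => \big[op/idx]_(b : bool) F (Some (i, b)))) => [|i _].
  by rewrite pair_big; apply: eq_bigr => -[].
by rewrite big_bool Monoid.mulmC.
Qed.

End BigQubit.

Lemma natr_forall (R : comPzSemiRingType) (T : finType) (P : pred T) :
  [forall x, P x]%:R = \prod_x (P x)%:R :> R.
Proof.
have [/forallP allP | /forallPn [x Px]] := boolP [forall x, P x].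
  by rewrite big1 // => x _; rewrite allP.
by rewrite (bigD1 x) //= (negbTE Px) mul0r.
Qed.

Section ConfigSum.
Variables (R : comPzSemiRingType) (n : nat).

Definition config_of_pairs (bd : bool * {ffun 'I_n -> bool * bool}) : config n :=
  [ffun q => if q is Some (i, t) then (if t then (bd.2 i).2 else (bd.2 i).1) else bd.1].

Definition pairs_of_config (c : config n) : bool * {ffun 'I_n -> bool * bool} :=
  (c (qA n), [ffun i => (c (qS i), c (qN i))]).

Lemma config_of_pairsK : cancel pairs_of_config config_of_pairs.
Proof. by move=> c; apply/ffunP => -[[i []]|]; rewrite !ffunE. Qed.

Lemma pairs_of_configK : cancel config_of_pairs pairs_of_config.
Proof.
move=> [b d]; rewrite /pairs_of_config ffunE; congr (_, _).
by apply/ffunP => i; rewrite !ffunE /=; case: (d i).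
Qed.

Lemma sum_config_factor (f : bool -> R) (g : 'I_n -> bool -> bool -> R) :
  \sum_(c : config n) f (c (qA n)) * \prod_(i < n) g i (c (qS i)) (c (qN i)) =
  (\sum_b f b) * \prod_(i < n) \sum_s \sum_t g i s t.
Proof.
rewrite (reindex config_of_pairs); last first.
  by exists pairs_of_config => x _; rewrite ?config_of_pairsK ?pairs_of_configK.
have pairE i : \sum_s \sum_t g i s t = \sum_(st : bool * bool) g i st.1 st.2.
  by rewrite pair_bigA.
rewrite [in RHS](eq_bigr _ (fun i _ => pairE i)) bigA_distr_bigA big_distrl /=.
under [in RHS]eq_bigr do rewrite big_distrr.
rewrite pair_bigA /=; apply: eq_bigr => -[b d] _ /=.
by rewrite ffunE; congr (_ * _); apply: eq_bigr => i _; rewrite !ffunE.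
Qed.

End ConfigSum.

Lemma expr_4addl (R : pzSemiRingType) (x : R) (k m : nat) :
  x ^+ 4 = 1 -> x ^+ (4 * k + m) = x ^+ m.
Proof. by move=> x4; rewrite exprD exprM x4 expr1n mul1r. Qed.

Lemma signr_half_4addl (R : pzRingType) (k m : nat) : (0 < m)%N ->
  (-1) ^+ ((4 * k + m).-1./2) = (-1) ^+ ((m.-1)./2) :> R.
Proof.
move=> m_gt0; rewrite (_ : (4 * k + m).-1./2 = 2 * k + (m.-1)./2)%N; last by lia.
by rewrite exprD exprM sqrrN !expr1n mul1r.
Qed.

Lemma odd_4addl (k m : nat) : odd (4 * k + m) = odd m.
Proof. by rewrite oddD oddM. Qed.

Lemma divn4_split (p : nat) : exists a r, (r < 4)%N /\ p = (4 * a + r)%N.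
Proof. by exists (p %/ 4)%N, (p %% 4)%N; rewrite ltn_pmod // {1}(divn_eq p 4) mulnC. Qed.

Section PauliAlgebra.
Variable C : numClosedFieldType.

Definition pauli_idx (mu nu : nat) : nat :=
  match mu, nu with
  | 0, x => x | x, 0 => x
  | 1, 2 => 3 | 2, 1 => 3 | 1, 3 => 2 | 3, 1 => 2 | 2, 3 => 1 | 3, 2 => 1
  | _, _ => 0 end%N.

Definition pauli_phase (mu nu : nat) : C :=
  match mu, nu with
  | 1%N, 2%N => 'i | 2%N, 1%N => - 'i | 1%N, 3%N => - 'i | 3%N, 1%N => 'i
  | 2%N, 3%N => 'i | 3%N, 2%N => - 'i
  | _, _ => 1 end.

Definition pauli_sign (mu : nat) : C := if mu == 2%N then -1 else 1.

(* Keeping N_i instead of S_i turns sigma_mu sigma_nu into (sigma_nu sigma_mu)^T, hence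
   the swapped phase and the sign of sigma_Y^T = - sigma_Y. *)
Definition pauli_phaseT (mu nu : nat) : C :=
  pauli_phase nu mu * pauli_sign (pauli_idx mu nu).

Lemma pauli_mul (mu nu : 'I_4) (a b : bool) :
  \sum_t pauli C mu a t * pauli C nu t b =
  pauli_phase mu nu * pauli C (pauli_idx mu nu) a b.
Proof.
rewrite big_bool; case_I4 mu; case_I4 nu; case: a; case: b => /=; ring: (sqrCi C).
Qed.

Lemma pauli_conj (mu : nat) (a b : bool) : (pauli C mu a b)^* = pauli C mu b a.
Proof.
by case: mu => [|[|[|mu]]] /=; case: a; case: b;
  rewrite /= ?rmorphN /= ?conjC_nat ?conjC0 ?conjC1 ?conjCi ?opprK.
Qed.

Lemma pauli_transpose (mu : nat) (a b : bool) :
  pauli C mu b a = pauli_sign mu * pauli C mu a b.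
Proof.
by rewrite /pauli_sign; case: mu => [|[|[|mu]]] /=; case: a; case: b;
  rewrite /= ?mul1r ?mulN1r ?opprK ?oppr0.
Qed.

Lemma pauli_trace (mu : nat) : \sum_a pauli C mu a a = (mu == 0)%:R * 2.
Proof.
by rewrite big_bool; case: mu => [|[|[|mu]]] /=; rewrite ?mul1r ?mul0r ?addr0 ?addNr.
Qed.

Lemma pauli_idx_eq0 (mu nu : 'I_4) : (pauli_idx mu nu == 0%N) = (mu == nu).
Proof. by case_I4 mu; case_I4 nu. Qed.

Lemma pauli_idxC (mu nu : nat) : pauli_idx mu nu = pauli_idx nu mu.
Proof. by case: mu => [|[|[|[|mu]]]]; case: nu => [|[|[|[|nu]]]]. Qed.

Lemma pauli_idx_diag (mu : nat) : pauli_idx mu mu = 0%N.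
Proof. by case: mu => [|[|[|[|mu]]]]. Qed.

Lemma pauli_phase_diag (mu : nat) : pauli_phase mu mu = 1.
Proof. by case: mu => [|[|[|[|mu]]]]. Qed.

Lemma exprCi4 : 'i ^+ 4 = 1 :> C.
Proof. by rewrite (exprM _ 2 2) sqrCi sqrrN expr1n. Qed.

Lemma exprNCi4 : (- 'i) ^+ 4 = 1 :> C.
Proof. by rewrite exprNn exprCi4 mulr1 -signr_odd. Qed.

Lemma conjC_NCiX (k : nat) : ((- 'i) ^+ k)^* = 'i ^+ k :> C.
Proof. by rewrite rmorphXn rmorphN /= conjCi opprK. Qed.

Lemma pauli_phase4 (mu nu : nat) : pauli_phase mu nu ^+ 4 = 1.
Proof.
by case: mu => [|[|[|[|?]]]]; case: nu => [|[|[|[|?]]]];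
  rewrite /= ?expr1n ?exprCi4 ?exprNCi4.
Qed.

Lemma pauli_phaseT4 (mu nu : nat) : pauli_phaseT mu nu ^+ 4 = 1.
Proof.
rewrite /pauli_phaseT /pauli_sign exprMn pauli_phase4 mul1r.
by case: ifP; rewrite ?expr1n // (exprM _ 2 2) sqrrN !expr1n.
Qed.

End PauliAlgebra.

Section QubitState.
Variables (C : numClosedFieldType) (psi : bool -> C).

Definition pauli_apply (mu : nat) (b : bool) : C := \sum_a pauli C mu b a * psi a.

Definition expectation (mu : nat) : C :=
  \sum_(a : bool) \sum_(b : bool) (psi a)^* * pauli C mu a b * psi b.

Lemma expectation0 : normalized psi -> expectation 0 = 1.
Proof.
rewrite /normalized !normCK => <-.
by rewrite /expectation !big_bool /=; ring.
Qed.

Lemma pauli_apply_overlap (mu nu : 'I_4) :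
  \sum_b pauli_apply mu b * (pauli_apply nu b)^* =
  pauli_phase C nu mu * expectation (pauli_idx mu nu).
Proof.
rewrite /pauli_apply /expectation !big_bool /=.
case_I4 mu; case_I4 nu => /=;
  rewrite ?rmorphD ?rmorphM ?rmorphN /= ?conjC_nat ?conjC0 ?conjC1 ?conjCi ?opprK;
  ring: (sqrCi C).
Qed.

End QubitState.

Lemma invr_alpha2 (C : numClosedFieldType) (n : nat) :
  (alpha C n 2)^-1 = - (- 'i) ^+ n.+1.
Proof. by rewrite /= invrN -exprVn invCi. Qed.

(* All phases are fourth roots of unity, so only p and q modulo 4 matter; the sixteen
   remaining cases are checked by [ring]. *)
Lemma pauli_phase_sum (C : numClosedFieldType) (p q : nat) (E D : nat -> C) :
  \sum_(mu < 4) \sum_(nu < 4) (alpha C (p + q) mu)^-1 * ((alpha C (p + q) nu)^-1)^* *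
     (pauli_phase C nu mu * E (pauli_idx mu nu)) *
     (pauli_phase C mu nu ^+ p * pauli_phaseT C mu nu ^+ q * D (pauli_idx mu nu))
  = 4 * (E 0%N * D 0%N +
         (if odd (p + q) && odd p then (-1) ^+ (p + q).-1./2 else 0) * E 2%N * D 2%N).
Proof.
have [a [r [r_lt4 ->]]] := divn4_split p.
have [b [s [s_lt4 ->]]] := divn4_split q.
rewrite (_ : (4 * a + r + (4 * b + s)) = 4 * (a + b) + (r + s))%N; last by lia.
rewrite !odd_4addl.
move: (a + b)%N => k.
under eq_bigr => mu _ do under eq_bigr => nu _ do
  rewrite (expr_4addl _ _ (pauli_phase4 _ _ _)) (expr_4addl _ _ (pauli_phaseT4 _ _ _)).
rewrite !big_ord_recl !big_ord0 /= !addr0 /bump /=.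
rewrite !invr_alpha2 -!addnS !(expr_4addl _ _ (exprNCi4 _)) /= invr1 invCi.
rewrite /pauli_phaseT /pauli_sign /= ?rmorphN /= ?conjC_NCiX ?conjC1 ?conjCi ?opprK.
case: r r_lt4 => [|[|[|[|//]]]] _; case: s s_lt4 => [|[|[|[|//]]]] _;
  rewrite /= ?signr_half_4addl //.
all: ring: (sqrCi C).
Qed.

Section Encoding.
Variables (C : numClosedFieldType) (n : nat).

Definition enc_const : C := 2^-1 * (sqrtC 2)^-1 ^+ n.

Lemma bell_apply (mu : nat) (a b : bool) :
  \sum_s \sum_t pauli C mu a s * (b == t)%:R * ((s == t)%:R / sqrtC 2) =
  pauli C mu a b / sqrtC 2.
Proof. by rewrite !big_bool; case: b => /=; ring. Qed.

Lemma enc_state_expansion (psi : bool -> C) (x : config n) :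
  enc_state psi x = enc_const * \sum_(mu < 4) (alpha C n mu)^-1 *
    pauli_apply psi mu (x (qA n)) * \prod_(i < n) pauli C mu (x (qS i)) (x (qN i)).
Proof.
rewrite /enc_state /Uenc.
under eq_bigr do rewrite -mulrA big_distrl /=.
rewrite -big_distrr /= exchange_big /= -mulrA; congr (_ * _).
rewrite big_distrr /=; apply: eq_bigr => mu _.
under eq_bigr do rewrite -mulrA.
rewrite -big_distrr /= -!mulrA mulrCA; congr (_ * _).
under eq_bigr => y _ do rewrite /init_state big_qubit /= mulrACA -big_split /=.
rewrite (sum_config_factor (fun a => pauli C mu (x (qA n)) a * psi a)
  (fun i s t => pauli C mu (x (qS i)) s * (x (qN i) == t)%:R * ((s == t)%:R / sqrtC 2))).
rewrite (eq_bigr (fun i => pauli C mu (x (qS i)) (x (qN i)) / sqrtC 2)) => [|i _].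
  by rewrite big_split /= prodr_const card_ord /pauli_apply; ring.
by rewrite -bell_apply.
Qed.

Lemma conjC_enc_const : enc_const^* = enc_const.
Proof.
by rewrite geC0_conj // mulr_ge0 ?invr_ge0 ?exprn_ge0 ?invr_ge0 ?sqrtC_ge0 ?ler0n.
Qed.

Lemma enc_const_sqr : 4 * enc_const ^+ 2 = (2 ^+ n)^-1.
Proof.
have half_sqr : (sqrtC 2)^-1 ^+ 2 = 2^-1 :> C by rewrite exprVn sqrtCK.
have four_quarter : 4 / 2 ^+ 2 = 1 :> C by field.
by rewrite /enc_const exprMn -exprM mulnC exprM half_sqr !exprVn mulrA four_quarter mul1r.
Qed.

Lemma rho_enc_expansion (psi : bool -> C) (x y : config n) :
  rho_enc psi x y = enc_const ^+ 2 * \sum_(mu < 4) \sum_(nu < 4)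
    (alpha C n mu)^-1 * ((alpha C n nu)^-1)^* *
    (pauli_apply psi mu (x (qA n)) * (pauli_apply psi nu (y (qA n)))^*) *
    \prod_(i < n) (pauli C mu (x (qS i)) (x (qN i)) * (pauli C nu (y (qS i)) (y (qN i)))^*).
Proof.
rewrite /rho_enc !enc_state_expansion rmorphM /= conjC_enc_const rmorph_sum /=.
rewrite mulrACA -expr2 big_distrl; congr (_ * _); apply: eq_bigr => mu _.
rewrite big_distrr; apply: eq_bigr => nu _.
rewrite !rmorphM rmorph_prod /= big_split /=; ring.
Qed.

End Encoding.

Section PartialTrace.
Variables (C : numClosedFieldType) (n : nat) (B : {set qubit n}) (u v : config n).

(* The factor of pair i in the (mu, nu) cross term of [reduced], as a function of the
   summation values s, t of S_i, N_i; as in [reduced], these are pinned to [false] on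
   the qubits kept in B, whose entries are read from u and v instead. *)
Definition pair_term (mu nu : nat) (i : 'I_n) (s t : bool) : C :=
  ((qS i \in B) ==> ~~ s)%:R * ((qN i \in B) ==> ~~ t)%:R *
  (pauli C mu (if qS i \in B then u (qS i) else s) (if qN i \in B then u (qN i) else t) *
   (pauli C nu (if qS i \in B then v (qS i) else s) (if qN i \in B then v (qN i) else t))^*).

Definition pair_trace (mu nu : nat) (i : 'I_n) : C := \sum_s \sum_t pair_term mu nu i s t.

Section ReducedExpansion.
Variable psi : bool -> C.
Hypothesis A_notin_B : qA n \notin B.

Lemma reduced_summandE (c : config n) :
  (if [forall q, (q \in B) ==> ~~ c q]
   then rho_enc psi (Defs.merge B u c) (Defs.merge B v c) else 0) =
  enc_const C n ^+ 2 * \sum_(mu < 4) \sum_(nu < 4)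
    (alpha C n mu)^-1 * ((alpha C n nu)^-1)^* *
    (pauli_apply psi mu (c (qA n)) * (pauli_apply psi nu (c (qA n)))^*) *
    \prod_(i < n) pair_term mu nu i (c (qS i)) (c (qN i)).
Proof.
rewrite -mulrb -mulr_natl natr_forall big_qubit /= (negbTE A_notin_B) mul1r.
rewrite rho_enc_expansion mulrCA; congr (_ * _).
rewrite big_distrr; apply: eq_bigr => mu _; rewrite big_distrr; apply: eq_bigr => nu _ /=.
rewrite !ffunE (negbTE A_notin_B) [LHS]mulrCA [in RHS]big_split /=; congr (_ * (_ * _)).
by apply: eq_bigr => i _; rewrite !ffunE.
Qed.

Lemma reduced_expansion :
  reduced psi B u v = enc_const C n ^+ 2 * \sum_(mu < 4) \sum_(nu < 4)
    (alpha C n mu)^-1 * ((alpha C n nu)^-1)^* *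
    (\sum_b pauli_apply psi mu b * (pauli_apply psi nu b)^*) *
    \prod_(i < n) pair_trace mu nu i.
Proof.
rewrite /reduced big_mkcond /= (eq_bigr _ (fun c _ => reduced_summandE c)) -mulr_sumr.
congr (_ * _); rewrite exchange_big; apply: eq_bigr => mu _.
rewrite exchange_big; apply: eq_bigr => nu _.
under eq_bigr do rewrite -mulrA.
rewrite -mulr_sumr -mulrA.
by rewrite (sum_config_factor (fun b => pauli_apply psi mu b * (pauli_apply psi nu b)^*)).
Qed.

End ReducedExpansion.

Lemma pair_trace_S (mu nu : 'I_4) (i : 'I_n) : qS i \in B -> qN i \notin B ->
  pair_trace mu nu i = pauli_phase C mu nu * pauli C (pauli_idx mu nu) (u (qS i)) (v (qS i)).
Proof.
move=> S_in N_out; rewrite /pair_trace /pair_term S_in (negbTE N_out) big_bool /=.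
rewrite big1 ?add0r => [|t _]; last by rewrite !mul0r.
by under eq_bigr do rewrite !mul1r pauli_conj; rewrite pauli_mul.
Qed.

Lemma pair_trace_N (mu nu : 'I_4) (i : 'I_n) : qS i \notin B -> qN i \in B ->
  pair_trace mu nu i =
  pauli_phase C nu mu * pauli_sign C (pauli_idx mu nu) *
  pauli C (pauli_idx mu nu) (u (qN i)) (v (qN i)).
Proof.
move=> S_out N_in; rewrite /pair_trace /pair_term N_in (negbTE S_out) /=.
under eq_bigr do rewrite big_bool /= mulr0 mul0r add0r !mul1r pauli_conj mulrC.
by rewrite pauli_mul pauli_idxC -mulrA -pauli_transpose.
Qed.

Lemma pair_trace_out (mu nu : 'I_4) (i : 'I_n) : qS i \notin B -> qN i \notin B ->
  pair_trace mu nu i = (mu == nu)%:R * 2.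
Proof.
move=> S_out N_out; rewrite /pair_trace /pair_term (negbTE S_out) (negbTE N_out) /=.
under eq_bigr do under eq_bigr do rewrite !mul1r pauli_conj.
rewrite (eq_bigr _ (fun s _ => pauli_mul _ mu nu s s)) -mulr_sumr pauli_trace pauli_idx_eq0.
by have [->|] := eqVneq mu nu; rewrite ?pauli_phase_diag ?mul1r ?mul0r ?mulr0.
Qed.

End PartialTrace.

Lemma uninformative_of_missing_pair (C : numClosedFieldType) (n : nat) (B : {set qubit n}) :
  qA n \notin B -> (exists i : 'I_n, qS i \notin B /\ qN i \notin B) -> uninformative C B.
Proof.
move=> A_notin_B [i [S_out N_out]] psi psi' psiN psi'N u v.
rewrite !reduced_expansion //; congr (_ * _).
apply: eq_bigr => mu _; apply: eq_bigr => nu _.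
have [<-|mu_neq_nu] := eqVneq mu nu.
  by rewrite !pauli_apply_overlap pauli_idx_diag !expectation0.
by rewrite (bigD1 i) //= pair_trace_out // (negbTE mu_neq_nu) !mul0r !mulr0.
Qed.

Section WitnessStates.
Variable C : numClosedFieldType.

Definition ket0 (b : bool) : C := if b then 0 else 1.
Definition ket34i (b : bool) : C := if b then 4 / 5 * 'i else 3 / 5.

Lemma normalized_ket0 : normalized ket0.
Proof. by rewrite /normalized /ket0 normr1 normr0 expr1n expr0n addr0. Qed.

Lemma conjC_ratio5 (k : nat) : (k%:R / 5 : C)^* = k%:R / 5.
Proof. by rewrite geC0_conj // divr_ge0 ?ler0n. Qed.

Lemma normalized_ket34i : normalized ket34i.
Proof.
rewrite /normalized /ket34i !normCK conjC_ratio5 rmorphM /= conjC_ratio5 conjCi.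
by field: (sqrCi C).
Qed.

Lemma blochY_ket0 : blochY ket0 = 0.
Proof. by rewrite /blochY /ket0 !big_bool /= rmorph0 rmorph1; ring. Qed.

Lemma blochY_ket34i : blochY ket34i = 24 / 25.
Proof.
rewrite /blochY /ket34i !big_bool /= conjC_ratio5 rmorphM /= conjC_ratio5 conjCi.
by field: (sqrCi C).
Qed.

End WitnessStates.

Section Transversal.
Variables (n : nat) (B : {set qubit n}).
Hypotheses (A_notin_B : qA n \notin B) (B_meets_pairs : forall i, qS i \in B \/ qN i \in B).

Definition pick_qubit (i : 'I_n) : qubit n := if qS i \in B then qS i else qN i.

Lemma pick_qubit_inj : injective pick_qubit.
Proof. by move=> i j; rewrite /pick_qubit /qS /qN; do 2 case: ifP => _; case. Qed.

Lemma card_le_of_no_full_pair :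
  (forall i, ~~ ((qS i \in B) && (qN i \in B))) -> (#|B| <= n)%N.
Proof.
move=> no_full; apply: (@leq_trans #|[set pick_qubit i | i : 'I_n]|); last first.
  by rewrite (card_imset _ pick_qubit_inj) card_ord.
apply: subset_leq_card; apply/subsetP => -[[i b]|] q_in; last by have := negP A_notin_B q_in.
apply/imsetP; exists i => //; rewrite /pick_qubit.
by case: b q_in => q_in; [move: (no_full i); rewrite q_in andbT => /negbTE -> | rewrite q_in].
Qed.

Lemma authorized_of_card_gt : (n < #|B|)%N -> authorized B.
Proof.
move=> card_gt.
have [/existsP [j /andP [S_in N_in]] | /existsPn no_full] :=
  boolP [exists j, (qS j \in B) && (qN j \in B)]; first by exists j.
by move: card_gt; rewrite ltnNge card_le_of_no_full_pair.
Qed.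

Hypothesis card_B : #|B| = n.

Lemma transversalE : B = [set pick_qubit i | i : 'I_n].
Proof.
apply/eqP; rewrite eq_sym eqEcard (card_imset _ pick_qubit_inj) card_ord card_B leqnn andbT.
apply/subsetP => _ /imsetP [i _ ->]; rewrite /pick_qubit.
by case: ifPn => // S_out; case: (B_meets_pairs i) => //; rewrite (negbTE S_out).
Qed.

Lemma transversal_no_full_pair (i : 'I_n) : qS i \in B -> qN i \notin B.
Proof.
move=> S_in; apply/negP; rewrite {1}transversalE => /imsetP [j _].
rewrite /pick_qubit; case: ifP => [_ | S_out] //.
by case=> eq_ij; rewrite -eq_ij S_in in S_out.
Qed.

Lemma transversal_not_authorized : ~ authorized B.
Proof. by move=> [j [S_in [N_in _]]]; move: (transversal_no_full_pair S_in); rewrite N_in. Qed.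

Variable C : numClosedFieldType.

Lemma prod_if_card (x y : C) :
  \prod_(i < n) (if qS i \in B then x else y) =
  x ^+ #|[set i : 'I_n | qS i \in B]| * y ^+ (n - #|[set i : 'I_n | qS i \in B]|).
Proof.
rewrite (bigID (fun i => qS i \in B)) /=.
rewrite (eq_bigr (fun=> x)) => [|i ->//].
rewrite [X in _ * X](eq_bigr (fun=> y)) => [|i /negbTE ->//].
have -> : (n - #|[set i : 'I_n | qS i \in B]|)%N = #|~: [set i : 'I_n | qS i \in B]|.
  by have := cardsC [set i : 'I_n | qS i \in B]; rewrite card_ord; lia.
by rewrite -!prodr_const; congr (_ * _); apply: eq_bigl => i; rewrite !inE.
Qed.

Lemma prod_pair_trace_transversal (u v : config n) (mu nu : 'I_4) :
  \prod_(i < n) pair_trace C B u v mu nu i =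
  pauli_phase C mu nu ^+ #|[set i : 'I_n | qS i \in B]| *
  pauli_phaseT C mu nu ^+ (n - #|[set i : 'I_n | qS i \in B]|) *
  \prod_(q in B) pauli C (pauli_idx mu nu) (u q) (v q).
Proof.
rewrite -prod_if_card [in X in _ * X]transversalE big_imset /=; last first.
  by move=> i j _ _; apply: pick_qubit_inj.
rewrite -big_split /=; apply: eq_bigr => i _; rewrite /pick_qubit.
case: ifPn => [S_in | S_out]; first by rewrite pair_trace_S ?transversal_no_full_pair.
by rewrite pair_trace_N //; case: (B_meets_pairs i); rewrite ?(negbTE S_out).
Qed.

Lemma reduced_transversal (psi : bool -> C) (u v : config n) : normalized psi ->
  reduced psi B u v =
  2^-n * (\prod_(q in B) pauli C 0 (u q) (v q) +
          (if odd n && odd #|[set i : 'I_n | qS i \in B]| then (-1) ^+ (n.-1)./2 else 0) *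
          blochY psi * \prod_(q in B) pauli C 2 (u q) (v q)).
Proof.
move=> psiN; set p := #|[set i : 'I_n | qS i \in B]|.
have p_le_n : (p <= n)%N by rewrite -[X in (_ <= X)%N](card_ord n) max_card.
have := pauli_phase_sum p (n - p) (expectation psi)
  (fun l => \prod_(q in B) pauli C l (u q) (v q)).
rewrite subnKC // expectation0 // -[expectation psi 2]/(blochY psi) mul1r => phase_sumE.
rewrite reduced_expansion // -enc_const_sqr (mulrC 4) -(mulrA _ 4) -phase_sumE; congr (_ * _).
apply: eq_bigr => mu _; apply: eq_bigr => nu _.
by rewrite pauli_apply_overlap prod_pair_trace_transversal.
Qed.

Lemma transversal_informative :
  odd n -> odd #|[set i : 'I_n | qS i \in B]| ->
  exists psi psi' : bool -> C, normalized psi /\ normalized psi' /\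
    exists u v : config n, reduced psi B u v <> reduced psi' B u v.
Proof.
move=> n_odd p_odd; exists (@ket0 C), (@ket34i C).
split; [exact: normalized_ket0 | split; first exact: normalized_ket34i].
exists [ffun=> false], [ffun=> true].
rewrite !reduced_transversal; [|exact: normalized_ket34i|exact: normalized_ket0].
rewrite n_odd p_odd /= blochY_ket0 blochY_ket34i.
set D0 := \prod_(q in B) _; set D2 := \prod_(q in B) _.
have D2_neq0 : D2 != 0.
  rewrite /D2 (eq_bigr (fun=> - 'i)) => [|q _]; last by rewrite !ffunE.
  by rewrite prodr_const expf_neq0 // oppr_eq0 neq0Ci.
apply/eqP; rewrite -subr_eq0 (_ : _ - _ = - (2^-n * (-1) ^+ (n.-1)./2 * (24 / 25) * D2)).
  by rewrite oppr_eq0 !mulf_neq0 ?invr_eq0 ?expf_neq0 ?oppr_eq0 ?oner_eq0 ?pnatr_eq0.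
by ring.
Qed.

End Transversal.

Theorem proposition2 (C : numClosedFieldType) (n : nat) (B : {set qubit n}) :
  (0 < n)%N -> qA n \notin B ->
  ((exists i : 'I_n, qS i \notin B /\ qN i \notin B) -> uninformative C B) /\
  ((forall i : 'I_n, qS i \in B \/ qN i \in B) ->
     ((n < #|B|)%N -> authorized B) /\
     (#|B| = n ->
        let p := #|[set i : 'I_n | qS i \in B]| in
        (~~ odd n -> uninformative C B) /\
        (odd n -> ~~ odd p -> uninformative C B) /\
        (odd n -> odd p ->
           partially_informative C B /\
           forall psi : bool -> C, normalized psi ->
             forall u v : config n,
               reduced psi B u v =
               2^-n * (\prod_(q in B) pauli C 0 (u q) (v q)
                       + (-1) ^+ (n.-1)./2 * blochY psi
                         * \prod_(q in B) pauli C 2 (u q) (v q))))).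
Proof.
move=> _ A_notin_B; split; first exact: uninformative_of_missing_pair.
move=> meets; split; first exact: authorized_of_card_gt.
move=> card_B p; have redE := reduced_transversal A_notin_B meets card_B.
split; [|split].
- by move=> n_even psi psi' psiN psi'N u v; rewrite !redE // (negbTE n_even) !mul0r.
- by move=> _ p_even psi psi' psiN psi'N u v; rewrite !redE // (negbTE p_even) andbF !mul0r.
move=> n_odd p_odd; split.
  by split; [exact: transversal_not_authorized | exact: transversal_informative].
by move=> psi psiN u v; rewrite redE // n_odd p_odd.
Qed.
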